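(* Let $r,g,a,h,m$ be positive integers with $a\le r$ and $ga+h<gr$, and put $n=rg$. Suppose that $q\ge r$ is a prime power satisfying $q^m\ge \frac{mn}{r}$ and that there is a $q$-ary $[r,r-a,a+1]$ linear code. If (i) $m\ge r$, or (ii) $m<r$ and there exists a $q$-ary $[r,r-m,\ge h+a+1]$ linear code, then there exists an MR $(n,r,h,a)$-LRC over a field of size $\ell=q^{\min\{hm,\frac{nm}{r}\}}$.
   Context: Definition: let $\ell$ be a prime power, $a,g,r,h$ positive integers with $ga+h<gr$, $n=gr$, $k=n-ga-h$. An MR (maximally recoverable) $(n,r,h,a)_\ell$-LRC is an $[n,k]$ linear code over $\mathbb{F}_\ell$ with a parity-check matrix $H\in\mathbb{F}_\ell^{(n-k)\times n}$ of the block form whose first $ga$ rows are block diagonal with diagonal blocks $A_1,\dots,A_g$ (each of size $a\times r$, the $n$ coordinates being split into $g$ consecutive groups of size $r$) and whose last $h$ rows are $(D_1|\cdots|D_g)$ with each $D_i$ of size $h\times r$, such that (i) each $A_i$ generates an $[r,a,r-a+1]_\ell$ MDS code, and (ii) every set of $ag+h$ columns of $H$ consisting of any $a$ columns from each group together with any $h$ further columns is linearly independent over $\mathbb{F}_\ell$. ''An MR $(n,r,h,a)$-LRC over a field of size $\ell$'' means an MR $(n,r,h,a)_\ell$-LRC. *)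

From HB Require Import structures.
From mathcomp Require Import all_boot all_order all_algebra all_field.
Set Implicit Arguments. Unset Strict Implicit. Unset Printing Implicit Defensive.
Import GRing.Theory.
Local Open Scope ring_scope.

Definition prime_power (q : nat) : Prop :=
  exists p e : nat, prime p /\ (0 < e)%N /\ q = (p ^ e)%N.

Definition wt (F : fieldType) (n : nat) (v : 'rV[F]_n) : nat :=
  #|[set j : 'I_n | v 0 j != 0]|.

(* G is a generator matrix of an [n,k,>=d] linear code over F *)
Definition lin_code_ge (F : fieldType) (n k d : nat) (G : 'M[F]_(k, n)) : Prop :=
  row_free G /\ forall x : 'rV[F]_k, x != 0 -> (d <= wt (x *m G))%N.

Definition lin_code (F : fieldType) (n k d : nat) (G : 'M[F]_(k, n)) : Prop :=
  lin_code_ge d G /\ exists x : 'rV[F]_k, x != 0 /\ wt (x *m G) = d.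

(* Parity-check matrix in block form; rows indexed by ('I_g * 'I_a) + 'I_h
   (local rows: row s of block A_i; global rows: row u of the D_j's),
   columns indexed by 'I_g * 'I_r (column t of group j). *)
Definition lrc_pcm (F : fieldType) (g r a h : nat)
  (A : 'I_g -> 'M[F]_(a, r)) (D : 'I_g -> 'M[F]_(h, r))
  (row : ('I_g * 'I_a) + 'I_h) (col : 'I_g * 'I_r) : F :=
  match row with
  | inl (i, s) => if i == col.1 then A i s col.2 else 0
  | inr u => D col.1 u col.2
  end.

(* MR (n,r,h,a)-LRC over F, n = g*r, given by its block parity-check matrix *)
Definition is_MR_LRC (F : fieldType) (g r a h : nat)
  (A : 'I_g -> 'M[F]_(a, r)) (D : 'I_g -> 'M[F]_(h, r)) : Prop :=
  (forall i, lin_code (r - a + 1) (A i)) /\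
  (* (ii) any ga+h columns with (at least) a in each group are linearly independent *)
  (forall S : {set 'I_g * 'I_r},
     #|S| = (g * a + h)%N ->
     (forall i : 'I_g, (a <= #|[set x in S | x.1 == i]|)%N) ->
     forall c : 'I_g * 'I_r -> F,
       (forall x, x \notin S -> c x = 0) ->
       (forall row, \sum_(x : 'I_g * 'I_r) c x * lrc_pcm A D row x = 0) ->
       forall x, c x = 0).

Definition exists_MR_LRC (l g r a h : nat) : Prop :=
  exists F : finFieldType, #|F| = l /\
    exists (A : 'I_g -> 'M[F]_(a, r)) (D : 'I_g -> 'M[F]_(h, r)), is_MR_LRC A D.

From HB Require Import structures.
From mathcomp Require Import all_boot all_order all_algebra all_field zify.
Set Implicit Arguments. Unset Strict Implicit. Unset Printing Implicit Defensive.
Import GRing.Theory.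

(* The local checks A_i are all the Vandermonde matrix of r distinct points x_j of
   F_q, and row u of D_i is (gam_ij ^ (q ^ u))_j, where gam_ij = psi_j theta_i lies
   in a tower F_q < E < L with [E : F_q] = m and [L : E] = min(h, g), psi_j and
   theta_i being Vandermonde vectors over bases of E / F_q and L / E.  Then an
   F_q-combination of the gam_ij with at most min(h, g) nonzero groups, each with
   at most m nonzero coefficients, vanishes only if it is trivial.
   For a column set S of the MR condition the submatrix is square, so it suffices
   that its rows are independent.  A left kernel vector (nu, la) makes the F_q-linear
   map Lam(y) = sum_u la_u y ^ (q ^ u) vanish on sum_ij z_ij gam_ij for every z
   supported on S that satisfies the local checks.  These z form a space of
   dimension at least |S| - ga = h; they vanish on the groups meeting S in at most
   a columns, and at most h groups meet S in more, so they are sparse and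
   z |-> sum_ij z_ij gam_ij is injective.  Thus Lam, of degree q ^ (h - 1), has
   q ^ h roots: la = 0, and then nu = 0.  When m < r, the Singleton bound for the
   assumed [r, r - m, >= h + a + 1] code gives m >= a + h, as sparsity requires. *)

Lemma sum_excess_bounds (g a h : nat) (s : 'I_g -> nat) :
  (forall i, a <= s i) -> \sum_i s i = g * a + h ->
  (forall i, s i <= a + h) /\ #|[set i | a < s i]| <= h.
Proof.
move=> s_ge_a sum_s.
have excess : \sum_i (s i - a) = h.
  have : \sum_i s i = \sum_(i < g) a + \sum_i (s i - a).
    by rewrite -big_split /=; apply: eq_bigr => i _; rewrite subnKC.
  by rewrite sum_s sum_nat_const card_ord; lia.
split=> [i | ].
  have : s i - a <= h by rewrite -excess (bigD1 i) //= leq_addr.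
  by move: (s_ge_a i); lia.
rewrite -excess -sum1_card; apply: (@leq_trans (\sum_(i | a < s i) (s i - a))).
  rewrite (eq_bigl (fun i => a < s i)) => [|i]; last by rewrite inE.
  by apply: leq_sum => i; rewrite subn_gt0.
by rewrite [X in _ <= X](bigID (fun i => a < s i)) leq_addr.
Qed.

Lemma card_fiber_fst (I J : finType) (S : {set I * J}) (i : I) :
  #|[set p in S | p.1 == i]| = #|[set j | (i, j) \in S]|.
Proof.
have pair_i_inj : injective (fun j : J => (i, j)) by move=> j1 j2 [].
rewrite -(card_imset _ pair_i_inj); apply: eq_card => -[i' j].
rewrite inE /=; apply/andP/imsetP => [[ijS /eqP ii'] | [j' j'S [-> ->]]].
  by exists j; rewrite ?inE -?ii'.
by rewrite inE in j'S; rewrite j'S eqxx.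
Qed.

Lemma sum_card_fibers (I J : finType) (S : {set I * J}) :
  \sum_i #|[set j | (i, j) \in S]| = #|S|.
Proof.
rewrite -sum1_card (partition_big fst predT) //=; apply: eq_bigr => i _.
by rewrite -card_fiber_fst -sum1_card; apply: eq_bigl => p; rewrite inE.
Qed.

Local Open Scope ring_scope.

(** * Vandermonde systems *)

Section Vandermonde.

Variables (K : fieldType) (I : finType) (x : I -> K).
Hypothesis x_inj : injective x.

Lemma vandermonde_sparse_eq0 (z : I -> K) (d : nat) :
  (#|[set i | z i != 0%R]| <= d)%N ->
  (forall s, (s < d)%N -> \sum_i z i * x i ^+ s = 0) -> forall i, z i = 0.
Proof.
move=> supp_z moments_z i0; apply/eqP; apply: contraT => z_i0.
pose T := [set i | z i != 0] :\ i0.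
pose P := \prod_(i <- enum T) ('X - (x i)%:P).
have size_P : (size P <= d)%N.
  by move: supp_z; rewrite size_prod_XsubC -cardE (cardsD1 i0) inE z_i0.
have : \sum_i z i * P.[x i] = 0.
  under eq_bigr do rewrite horner_coef mulr_sumr.
  rewrite exchange_big big1 // => s _; under eq_bigr do rewrite mulrCA.
  by rewrite -mulr_sumr moments_z ?mulr0 // (leq_trans (ltn_ord s)).
have P_i0 : P.[x i0] != 0.
  rewrite horner_prod big_enum /=; apply/prodf_neq0 => i; rewrite !inE => /andP[i_i0 _].
  by rewrite hornerXsubC subr_eq0; apply: contra i_i0 => /eqP/x_inj->.
rewrite (bigD1 i0) //= big1 ?addr0 => [|i i_i0]; last first.
  have [-> | z_i] := eqVneq (z i) 0; first by rewrite mul0r.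
  rewrite horner_prod (big_rem i) ?mem_enum ?inE ?i_i0 ?z_i //=.
  by rewrite hornerXsubC subrr mul0r mulr0.
by move/eqP; rewrite mulf_eq0 (negPf z_i0) (negPf P_i0).
Qed.

Lemma roots_geq_coefs_eq0 (J : {set I}) (a : nat) (c : 'I_a -> K) :
  (a <= #|J|)%N -> (forall j, j \in J -> \sum_(s < a) c s * x j ^+ s = 0) ->
  forall s, c s = 0.
Proof.
move=> a_le_J roots_J s.
pose P := \poly_(i < a) (if insub i is Some o then c o else 0).
have P_eq0 : P = 0.
  apply: (@roots_geq_poly_eq0 _ P [seq x j | j <- enum J]).
  - apply/allP => y /mapP[j]; rewrite mem_enum => jJ ->.
    rewrite /root horner_poly; apply/eqP; rewrite -[RHS](roots_J j jJ).
    by apply: eq_bigr => i _; rewrite valK.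
  - by rewrite map_inj_uniq ?enum_uniq.
  - by rewrite size_map -cardE (leq_trans (size_poly _ _)).
by have := congr1 (fun p : {poly K} => p`_s) P_eq0; rewrite coef_poly coef0 ltn_ord valK.
Qed.

End Vandermonde.

Definition vandermonde_vec (K : fieldType) (V : vectType K) (c : K) : V :=
  \sum_(s < \dim {:V}) c ^+ s *: (vbasis {:V})`_s.

Lemma vandermonde_vec_sparse_free (K : fieldType) (V : vectType K) (I : finType)
    (x : I -> K) (z : I -> K) :
  injective x -> (#|[set i | z i != 0%R]| <= \dim {:V})%N ->
  \sum_i z i *: vandermonde_vec V (x i) = 0 -> forall i, z i = 0.
Proof.
move=> x_inj supp_z comb_eq0; apply: (vandermonde_sparse_eq0 x_inj supp_z) => s lt_s.
have /freeP vbasis_free := basis_free (vbasisP {:V}).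
apply: (vbasis_free (fun t : 'I__ => \sum_i z i * x i ^+ t) _ (Ordinal lt_s)).
rewrite -[RHS]comb_eq0; under [RHS]eq_bigr do rewrite scaler_sumr.
rewrite [RHS]exchange_big; apply: eq_bigr => t _; rewrite scaler_suml.
by apply: eq_bigr => i _; rewrite scalerA.
Qed.

(** * Linear codes *)

Lemma wtE (K : fieldType) (n : nat) (v : 'rV[K]_n) :
  wt v = (n - #|[set j | v 0%R j == 0%R]|)%N.
Proof.
rewrite /wt cardsCs card_ord; congr (_ - _)%N; apply: eq_card => j.
by rewrite !inE negbK.
Qed.

Lemma card_widen_ord (n m : nat) (le_nm : (n <= m)%N) :
  #|[set widen_ord le_nm j | j : 'I_n]| = n.
Proof. by rewrite card_imset ?card_ord // => i j /(congr1 val) /= /val_inj. Qed.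

Lemma singleton_bound (K : fieldType) (r k d : nat) (G : 'M[K]_(k, r)) :
  (0 < k)%N -> (k <= r)%N -> lin_code_ge d G -> (d <= r - k + 1)%N.
Proof.
move=> k_gt0 k_le_r [G_free G_wt].
have le_k1_r : (k.-1 <= r)%N := leq_trans (leq_pred k) k_le_r.
set Z := [set widen_ord le_k1_r j | j : 'I_k.-1].
have [v /sub_kermxP v_ker v_neq0] : exists2 v : 'rV_k,
    (v <= kermx (colsub (widen_ord le_k1_r) G))%MS & v != 0.
  apply/rowV0Pn; rewrite kermx_eq0 /row_free neq_ltn.
  by rewrite (leq_ltn_trans (rank_leq_col _)) // ltn_predL.
have := G_wt v v_neq0; rewrite wtE; set zeros := [set j | _ == _].
have /subset_leq_card : Z \subset zeros.
  apply/subsetP => _ /imsetP[j _ ->]; rewrite inE.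
  by move: v_ker; rewrite mulmx_colsub => /rowP/(_ j); rewrite !mxE => ->.
by rewrite card_widen_ord -subn1; lia.
Qed.

Lemma vandermonde_mds (K : fieldType) (r a : nat) (v : 'rV[K]_r) :
  injective (v 0) -> (0 < a)%N -> (a <= r)%N ->
  lin_code (r - a + 1) (Vandermonde a v).
Proof.
move=> v_inj a_gt0 a_le_r.
have codeword j (c : 'rV_a) :
    (c *m Vandermonde a v) 0 j = \sum_(s < a) c 0 s * v 0 j ^+ s.
  by rewrite mxE; apply: eq_bigr => s _; rewrite mxE.
split; first split.
- apply: inj_row_free => c c_eq0; apply/rowP => s; rewrite mxE.
  apply: (roots_geq_coefs_eq0 v_inj (J := setT)) => [|j _].
    by rewrite cardsT card_ord.
  by rewrite -codeword c_eq0 mxE.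
- move=> c c_neq0; rewrite wtE; set zeros := [set j | _ == _].
  suff : (#|zeros| < a)%N by move: (max_card zeros); rewrite card_ord; lia.
  rewrite ltnNge; apply: contra c_neq0 => a_zeros; apply/eqP/rowP => s; rewrite mxE.
  apply: (roots_geq_coefs_eq0 v_inj a_zeros) => j; rewrite inE -codeword.
  exact/eqP.
- have le_a1_r : (a.-1 <= r)%N := leq_trans (leq_pred a) a_le_r.
  set Z := [set widen_ord le_a1_r j | j : 'I_a.-1].
  pose P := \prod_(c <- [seq v 0 j | j <- enum Z]) ('X - c%:P).
  have size_P : size P = a.
    by rewrite size_prod_XsubC size_map -cardE card_widen_ord prednK.
  exists (\row_(s < a) P`_s); split.
    have lt_a1_a : (a.-1 < a)%N by rewrite ltn_predL.
    apply/eqP => /rowP /(_ (Ordinal lt_a1_a)); rewrite !mxE /=.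
    rewrite -size_P -/(lead_coef P) (monicP (monic_prod_XsubC _ _ _)).
    exact/eqP/oner_neq0.
  rewrite wtE; suff -> : [set j | (\row_(s < a) P`_s *m Vandermonde a v) 0 j == 0] = Z.
    by rewrite card_widen_ord; lia.
  apply/setP => j; rewrite inE codeword.
  under eq_bigr do rewrite mxE.
  rewrite -horner_coef_wide ?size_P // -/(root P _) root_prod_XsubC.
  by rewrite (mem_map v_inj) mem_enum.
Qed.

(** * Square systems and kernels *)

Lemma cols_free_of_rows_free (K : fieldType) (R C : finType) (S : {set C})
    (H : R -> C -> K) :
  #|S| = #|R| ->
  (forall w : R -> K, (forall y, y \in S -> \sum_rho w rho * H rho y = 0) ->
     forall rho, w rho = 0) ->
  forall c : C -> K, (forall y, y \notin S -> c y = 0) ->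
  (forall rho, \sum_y c y * H rho y = 0) -> forall y, c y = 0.
Proof.
move=> card_S rows_free c c_supp c_ker.
pose M : 'M[K]_(#|R|, #|S|) := \matrix_(k, l) H (enum_val k) (enum_val l).
have M_free : row_free M.
  apply: inj_row_free => u uM; apply/rowP => k; rewrite mxE -[k]enum_valK.
  apply: (rows_free (fun rho => u 0 (enum_rank rho))) => y yS.
  rewrite (reindex (fun k : 'I_#|R| => enum_val k)) /=; last exact/onW_bij/enum_val_bij.
  transitivity ((u *m M) 0 (enum_rank_in yS y)); last by rewrite uM mxE.
  by rewrite mxE; apply: eq_bigr => i _; rewrite enum_valK mxE enum_rankK_in.
have Mt_free : row_free M^T by rewrite /row_free mxrank_tr (eqP M_free) card_S.
have c_S : \row_l c (enum_val l) = 0 :> 'rV_#|S|.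
  apply: (row_free_inj Mt_free); rewrite mul0mx; apply/rowP => k.
  rewrite !mxE -[RHS](c_ker (enum_val k)) (bigID (mem S)) /=.
  rewrite [X in _ = _ + X]big1 ?addr0 => [|y y_notS]; last by rewrite c_supp ?mul0r.
  by rewrite [RHS]big_enum_val; apply: eq_bigr => l _; rewrite !mxE.
move=> y; have [yS | /c_supp //] := boolP (y \in S).
by have /rowP/(_ (enum_rank_in yS y)) := c_S; rewrite !mxE enum_rankK_in.
Qed.

Lemma kernel_on_support_param (K : fieldType) (T U : finType) (S : {set T})
    (C : T -> U -> K) :
  exists2 k, (#|S| - #|U| <= k)%N & exists f : 'rV[K]_k -> T -> K,
    [/\ forall y t, t \notin S -> f y t = 0,
        forall y u, \sum_t f y t * C t u = 0,
        forall y1 y2 t, f (y1 - y2) t = f y1 t - f y2 t &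
        forall y, (forall t, f y t = 0) -> y = 0].
Proof.
pose B : 'M[K]_(#|S|, #|U|) := \matrix_(l, u) C (enum_val l) (enum_val u).
pose Y := row_base (kermx B).
exists (\rank (kermx B)); first by rewrite mxrank_ker leq_sub2l ?rank_leq_col.
pose f (y : 'rV_(\rank (kermx B))) t := \sum_(l | t == enum_val l) (y *m Y) 0 l.
have f_enum y (l : 'I_#|S|) : f y (enum_val l) = (y *m Y) 0 l.
  by rewrite /f (big_pred1 l) // => l'; rewrite /= (inj_eq enum_val_inj) eq_sym.
exists f; split.
- move=> y t t_notS; apply: big_pred0 => l; apply: contraNF t_notS => /eqP->.
  exact: enum_valP.
- move=> y u; have vB : (y *m Y) *m B = 0.
    by apply/sub_kermxP; rewrite (submx_trans (submxMl _ _)) ?eq_row_base.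
  transitivity (((y *m Y) *m B) 0 (enum_rank u)); last by rewrite vB mxE.
  under eq_bigr do rewrite big_distrl /=.
  rewrite mxE (exchange_big_dep xpredT) //=; apply: eq_bigr => l _.
  by rewrite (big_pred1 (enum_val l)) // [B _ _]mxE enum_rankK.
- by move=> y1 y2 t; rewrite /f mulmxBl -sumrB; apply: eq_bigr => l _; rewrite !mxE.
- move=> y f_eq0; apply: (row_free_inj (row_base_free (kermx B))).
  by rewrite mul0mx; apply/rowP => l; rewrite -f_enum f_eq0 mxE.
Qed.

(** * Linearized polynomials *)

Definition linearized (L : fieldType) (q h : nat) (la : 'I_h -> L) (y : L) : L :=
  \sum_u la u * y ^+ (q ^ u).

Lemma linearized_poly_eq0 (L : fieldType) (q h : nat) (la : 'I_h -> L) (ys : seq L) :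
  (1 < q)%N -> uniq ys -> (q ^ h.-1 < size ys)%N ->
  (forall y, y \in ys -> linearized q la y = 0) -> forall u, la u = 0.
Proof.
move=> q_gt1 ys_uniq ys_size ys_roots.
pose P : {poly L} := \sum_u la u *: 'X^(q ^ u).
have size_P : (size P <= (q ^ h.-1).+1)%N.
  rewrite (leq_trans (size_sum _ _ _)) //; apply/bigmax_leqP => u _.
  rewrite (leq_trans (size_scale_leq _ _)) // size_polyXn ltnS.
  rewrite leq_pexp2l ?(ltnW q_gt1) //.
  by have := ltn_ord u; rewrite -subn1; lia.
have P_eq0 : P = 0.
  apply: (roots_geq_poly_eq0 _ ys_uniq (leq_trans size_P ys_size)).
  apply/allP => y y_in; rewrite /root horner_sum; apply/eqP.
  rewrite -[RHS](ys_roots y y_in); apply: eq_bigr => u _.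
  by rewrite hornerZ hornerXn.
move=> u; have /(congr1 (coefp (q ^ u))) := P_eq0; rewrite /= coef0 coef_sum.
rewrite (bigD1 u) //= coefZ coefXn eqxx mulr1 big1 ?addr0 // => v v_neq_u.
by rewrite coefZ coefXn eqn_exp2l // (inj_eq val_inj) eq_sym (negPf v_neq_u) mulr0.
Qed.

Section FrobeniusLinearity.

Variables (F : finFieldType) (L : fieldType) (iota : {rmorphism F -> L}).
Local Notation q := #|F|.

Lemma exprD_card_pow u (y z : L) : (y + z) ^+ (q ^ u) = y ^+ (q ^ u) + z ^+ (q ^ u).
Proof.
have [p _ pcharF] := finPcharP F.
have pnat_q : p.-nat q by rewrite -cardsT; apply: (pprimeChar_pgroup pcharF).
apply: exprDn_pchar; rewrite (eq_pnat _ (pcharf_eq (rmorph_pchar iota pcharF))).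
by rewrite pnatX pnat_q.
Qed.

Variables (h : nat) (la : 'I_h -> L).

Lemma linearized_sum (I : finType) (G : I -> L) :
  linearized q la (\sum_i G i) = \sum_i linearized q la (G i).
Proof.
have q_pow_gt0 u : (0 < q ^ u)%N by rewrite expn_gt0 (ltnW (finNzRing_gt1 F)).
rewrite /linearized [RHS]exchange_big; apply: eq_bigr => u _.
have zero_pow : 0 ^+ (q ^ u) = 0 :> L by rewrite expr0n eqn0Ngt q_pow_gt0.
by rewrite (big_morph _ (exprD_card_pow u) zero_pow) mulr_sumr.
Qed.

Lemma linearized_iotaM c y : linearized q la (iota c * y) = iota c * linearized q la y.
Proof.
have iota_fixed u : iota c ^+ (q ^ u) = iota c.
  elim: u => [|u IHu]; first by rewrite expr1.
  by rewrite expnSr exprM IHu -rmorphXn expf_card.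
by rewrite /linearized mulr_sumr; apply: eq_bigr => u _; rewrite exprMn iota_fixed mulrCA.
Qed.

End FrobeniusLinearity.

(** * Sparse independence and the MR property *)

Lemma big_pair_fst (R : nmodType) (I J : finType) (i : I) (G : I * J -> R) :
  \sum_(p | p.1 == i) G p = \sum_j G (i, j).
Proof.
transitivity (\sum_(i' | i' == i) \sum_j G (i', j)); last by rewrite big_pred1_eq.
by rewrite pair_big_dep; apply: eq_big => [p | [? ?] _]; rewrite ?andbT.
Qed.

Lemma sum_lrc_pcm (K : fieldType) (g r a h : nat) (A : 'I_g -> 'M[K]_(a, r))
    (D : 'I_g -> 'M[K]_(h, r)) (w : ('I_g * 'I_a) + 'I_h -> K) i j :
  \sum_rho w rho * lrc_pcm A D rho (i, j) =
  \sum_s w (inl (i, s)) * A i s j + \sum_u w (inr u) * D i u j.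
Proof.
rewrite big_sumType /=; congr (_ + _).
rewrite -(big_pair_fst _ (fun p => w (inl p) * A p.1 p.2 j)) [RHS]big_mkcond /=.
by apply: eq_bigr => -[i' s] _ /=; case: eqP => [->|]; rewrite ?mulr0.
Qed.

Definition lin_comb (F L : fieldType) (iota : F -> L) (g r : nat)
    (gam : 'I_g -> 'I_r -> L) (z : 'I_g -> 'I_r -> F) : L :=
  \sum_i \sum_j iota (z i j) * gam i j.

Definition sparse_indep (F L : fieldType) (iota : F -> L) (g r : nat)
    (gam : 'I_g -> 'I_r -> L) (t w : nat) : Prop :=
  forall z : 'I_g -> 'I_r -> F,
    (#|[set i | [exists j, z i j != 0%R]]| <= t)%N ->
    (forall i, #|[set j | z i j != 0%R]| <= w)%N ->
    lin_comb iota gam z = 0 -> forall i j, z i j = 0.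

Lemma sparse_indepW (F L : fieldType) (iota : F -> L) (g r : nat)
    (gam : 'I_g -> 'I_r -> L) (t w t' w' : nat) :
  (minn t' g <= t)%N -> (minn w' r <= w)%N ->
  sparse_indep iota gam t w -> sparse_indep iota gam t' w'.
Proof.
move=> le_t le_w gam_indep z rows_le row_le; apply: gam_indep.
  by rewrite (leq_trans _ le_t) // leq_min rows_le (leq_trans (max_card _)) ?card_ord.
move=> i; rewrite (leq_trans _ le_w) // leq_min row_le.
by rewrite (leq_trans (max_card _)) ?card_ord.
Qed.

Lemma vandermonde_tower_sparse_indep (F : fieldType) (E : fieldExtType F)
    (L : fieldExtType E) (g r : nat) (x : 'I_r -> F) (al : 'I_g -> E) :
  injective x -> injective al ->
  sparse_indep (in_alg L \o in_alg E)
    (fun i j => vandermonde_vec E (x j) *: vandermonde_vec L (al i))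
    (\dim {:L}) (\dim {:E}).
Proof.
move=> x_inj al_inj z rows_le row_le comb_eq0.
pose eps i : E := \sum_j z i j *: vandermonde_vec E (x j).
have eps_eq0 : forall i, eps i = 0.
  apply: (vandermonde_vec_sparse_free (V := L) al_inj).
    apply: leq_trans rows_le; apply/subset_leq_card/subsetP => i; rewrite !inE.
    apply: contraR; rewrite negb_exists => /forallP z_i.
    by rewrite /eps big1 // => j _; move/negPn/eqP: (z_i j) => ->; rewrite scale0r.
  rewrite -[RHS]comb_eq0; apply: eq_bigr => i _; rewrite scaler_suml.
  by apply: eq_bigr => j _; rewrite /= mulr_algl scalerA mulr_algl.
move=> i; apply: (vandermonde_vec_sparse_free (V := E) x_inj (row_le i)).
exact: eps_eq0.
Qed.

Section LinearizedMR.

Variables (Fq : finFieldType) (L : fieldType) (iota : {rmorphism Fq -> L}).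
Variables (g r a h : nat) (x : 'I_r -> Fq) (gam : 'I_g -> 'I_r -> L).
Hypotheses (x_inj : injective x) (a_gt0 : (0 < a)%N) (a_le_r : (a <= r)%N).
Hypothesis gam_indep : sparse_indep iota gam h (a + h).

Local Notation q := #|Fq|.
Local Notation A := (Vandermonde a (\row_j iota (x j))).
Local Notation D i := (\matrix_(u < h, j < r) gam i j ^+ (q ^ u)).

Section FixedSupport.

Variable S : {set 'I_g * 'I_r}.
Hypotheses (card_S : #|S| = (g * a + h)%N)
           (fibers_S : forall i, (a <= #|[set p in S | p.1 == i]|)%N).

Lemma local_kernel_sparse (z : 'I_g -> 'I_r -> Fq) :
  (forall i j, (i, j) \notin S -> z i j = 0) ->
  (forall i s, (s < a)%N -> \sum_j z i j * x j ^+ s = 0) ->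
  (#|[set i | [exists j, z i j != 0%R]]| <= h)%N /\
  forall i, (#|[set j | z i j != 0%R]| <= a + h)%N.
Proof.
move=> z_S z_local; pose Si i := [set j | (i, j) \in S].
have [Si_le Si_gt_a] :
    (forall i, #|Si i| <= a + h)%N /\ (#|[set i | a < #|Si i|]| <= h)%N.
  apply: sum_excess_bounds => [i|]; first by rewrite -card_fiber_fst.
  by rewrite sum_card_fibers.
have row_le i : (#|[set j | z i j != 0%R]| <= #|Si i|)%N.
  apply/subset_leq_card/subsetP => j; rewrite !inE; apply: contraR => /z_S->.
  by rewrite eqxx.
split=> [|i]; last exact: leq_trans (row_le i) (Si_le i).
apply: leq_trans Si_gt_a; apply/subset_leq_card/subsetP => i; rewrite !inE.
case/existsP=> j; apply: contraTT; rewrite -leqNgt negbK => Si_le_a.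
by rewrite (vandermonde_sparse_eq0 x_inj (leq_trans (row_le i) Si_le_a) (z_local i)).
Qed.

Lemma linearized_local_kernel (w : ('I_g * 'I_a) + 'I_h -> L)
    (z : 'I_g -> 'I_r -> Fq) :
  (forall y, y \in S -> \sum_rho w rho * lrc_pcm (fun=> A) (fun i => D i) rho y = 0) ->
  (forall i j, (i, j) \notin S -> z i j = 0) ->
  (forall i s, (s < a)%N -> \sum_j z i j * x j ^+ s = 0) ->
  linearized q (fun u => w (inr u)) (lin_comb iota gam z) = 0.
Proof.
move=> w_S z_S z_local; rewrite /lin_comb (linearized_sum iota); apply: big1 => i _.
rewrite (linearized_sum iota).
transitivity (\sum_j iota (z i j) * - \sum_(s < a) w (inl (i, s)) * iota (x j) ^+ s).
  apply: eq_bigr => j _; rewrite linearized_iotaM.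
  have [ijS | /z_S->] := boolP ((i, j) \in S); last by rewrite rmorph0 !mul0r.
  have := w_S _ ijS; rewrite sum_lrc_pcm => column_eq.
  congr (_ * _); apply/eqP; rewrite -addr_eq0 addrC; apply/eqP.
  by rewrite -[RHS]column_eq; congr (_ + _); apply: eq_bigr => ? _; rewrite !mxE.
under eq_bigr do rewrite mulrN mulr_sumr.
rewrite sumrN exchange_big big1 ?oppr0 // => s _.
transitivity (w (inl (i, s)) * iota (\sum_j z i j * x j ^+ s)); last first.
  by rewrite z_local // rmorph0 mulr0.
rewrite rmorph_sum mulr_sumr; apply: eq_bigr => j _.
by rewrite rmorphM rmorphXn mulrCA.
Qed.

Lemma local_kernel_param :
  exists2 k, (h <= k)%N & exists z : 'rV[Fq]_k -> 'I_g -> 'I_r -> Fq,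
    [/\ forall y i j, (i, j) \notin S -> z y i j = 0,
        forall y i s, (s < a)%N -> \sum_j z y i j * x j ^+ s = 0,
        forall y1 y2 i j, z (y1 - y2) i j = z y1 i j - z y2 i j &
        forall y, (forall i j, z y i j = 0) -> y = 0].
Proof.
pose C (p : 'I_g * 'I_r) (v : 'I_g * 'I_a) := if p.1 == v.1 then x p.2 ^+ v.2 else 0.
have [k k_ge [f [f_S f_ker f_sub f_inj]]] := kernel_on_support_param S C.
exists k; first by move: k_ge; rewrite card_S card_prod !card_ord; lia.
exists (fun y i j => f y (i, j)); split=> [y i j | y i s lt_s_a | y1 y2 i j | y f_eq0].
- exact: f_S.
- rewrite -[RHS](f_ker y (i, Ordinal lt_s_a)).
  rewrite -(big_pair_fst i (fun p => f y p * x p.2 ^+ s)) big_mkcond.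
  by apply: eq_bigr => -[i' j] _; rewrite /C /=; case: eqP; rewrite ?mulr0.
- exact: f_sub.
- by apply: f_inj => -[i j]; apply: f_eq0.
Qed.

Lemma pcm_rows_free_on (w : ('I_g * 'I_a) + 'I_h -> L) :
  (forall y, y \in S -> \sum_rho w rho * lrc_pcm (fun=> A) (fun i => D i) rho y = 0) ->
  forall rho, w rho = 0.
Proof.
move=> w_S; have [k k_ge [z [z_S z_local z_sub z_inj]]] := local_kernel_param.
have comb_inj : injective (fun y => lin_comb iota gam (z y)).
  move=> y1 y2 eq_comb; apply/eqP; rewrite -subr_eq0; apply/eqP/z_inj.
  have [rows_le row_le] := local_kernel_sparse (z_S (y1 - y2)) (z_local (y1 - y2)).
  apply: (gam_indep rows_le row_le).
  transitivity (lin_comb iota gam (z y1) - lin_comb iota gam (z y2)); last first.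
    by rewrite eq_comb subrr.
  rewrite /lin_comb -sumrB; apply: eq_bigr => i _; rewrite -sumrB.
  by apply: eq_bigr => j _; rewrite z_sub rmorphB mulrBl.
have la_eq0 u : w (inr u) = 0.
  have h_gt0 : (0 < h)%N := leq_ltn_trans (leq0n u) (ltn_ord u).
  pose ys := [seq lin_comb iota gam (z y) | y <- enum 'rV_k].
  apply: (@linearized_poly_eq0 L q h (fun v => w (inr v)) ys _ _ _ _ u).
  - exact: finNzRing_gt1.
  - by rewrite map_inj_uniq ?enum_uniq.
  - rewrite size_map -cardE card_mx mul1n ltn_exp2l ?finNzRing_gt1 //.
    by rewrite -subn1; lia.
  - move=> _ /mapP[y _ ->].
    exact: (linearized_local_kernel w_S (z_S y) (z_local y)).
have nu_eq0 i s : w (inl (i, s)) = 0.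
  have iota_x_inj : injective (fun j => iota (x j)) := inj_comp (fmorph_inj iota) x_inj.
  pose Si := [set j | (i, j) \in S].
  apply: (@roots_geq_coefs_eq0 _ _ _ iota_x_inj Si a (fun t => w (inl (i, t))) _ _ s).
    by rewrite -card_fiber_fst.
  move=> j; rewrite inE => ijS; have := w_S _ ijS.
  rewrite sum_lrc_pcm [X in _ + X]big1 ?addr0 => [column_eq|u _]; last first.
    by rewrite la_eq0 mul0r.
  by rewrite -[RHS]column_eq; apply: eq_bigr => t _; rewrite !mxE.
by case=> [[i s] | u].
Qed.

End FixedSupport.

Lemma linearized_vandermonde_MR : is_MR_LRC (fun=> A) (fun i => D i).
Proof.
split=> [i | S card_S fibers_S].
  by apply: vandermonde_mds => // j1 j2; rewrite !mxE => /fmorph_inj/x_inj.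
apply: cols_free_of_rows_free; first by rewrite card_S card_sum card_prod !card_ord.
exact: pcm_rows_free_on.
Qed.

End LinearizedMR.

(** * Finite field towers *)

Lemma card_finFieldExt (F : finFieldType) (L : fieldExtType F) :
  #|FinFieldExtType L| = (#|F| ^ \dim {:L})%N.
Proof.
have card_full := @card_vspace F (finvect_type L) _ fullv.
have card_fullv := @card_vspacef F (finvect_type L) _.
by rewrite -card_full card_fullv.
Qed.

Lemma natr_card_eq0 (R : finNzRingType) : #|R|%:R = 0 :> R.
Proof.
(* Translation by 1 permutes R. *)
apply: (addrI (\sum_(x : R) x)); rewrite addr0 {2}(reindex_inj (addIr 1)) big_split /=.
by rewrite -sumr_const.
Qed.

Lemma separable_Xn_sub_X (R : idomainType) (N : nat) :
  (1 < N)%N -> N%:R = 0 :> R -> separable_poly ('X^N - 'X : {poly R}).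
Proof.
move=> N_gt1 N_eq0; have N1_gt0 : (0 < N.-1)%N by rewrite -ltnS prednK // ltnW.
have -> : 'X^N - 'X = ('X^(N.-1) - 1) * ('X - 0%:P) :> {poly R}.
  by rewrite subr0 mulrBl mul1r -exprSr prednK // ltnW.
rewrite separable_root /root !hornerE expr0n eqn0Ngt N1_gt0 sub0r oppr_eq0 oner_eq0.
rewrite andbT cyclotomic.separable_Xn_sub_1 // -subn1 natrB ?(ltnW N_gt1) // N_eq0.
by rewrite sub0r oppr_eq0 oner_neq0.
Qed.

(* The splitting field M of X^N - X, N = #|F|^k: the N-th power map is the k-th
   power of the Frobenius generator of 'Gal(M / F), it fixes the roots of
   X^N - X, hence all of M, and these N roots are distinct. *)
Lemma finField_ext_exists (F : finFieldType) (k : nat) :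
  (0 < k)%N -> {L : fieldExtType F | \dim {:L} = k}.
Proof.
move=> k_gt0; set N := (#|F| ^ k)%N.
have N_gt1 : (1 < N)%N by rewrite -(expn0 #|F|) ltn_exp2l ?finNzRing_gt1.
have size_p (R : nzRingType) : size ('X^N - 'X : {poly R}) = N.+1.
  by rewrite size_polyDl ?size_polyXn ?size_polyN ?size_polyX.
have p_neq0 : 'X^N - 'X != 0 :> {poly F} by rewrite -size_poly_gt0 size_p.
have [M M_split] := FinSplittingFieldFor p_neq0; exists M.
have [zs p_split M_gen] := M_split; rewrite rmorphB rmorphXn /= map_polyX in p_split.
apply: (expnI (finNzRing_gt1 F)); rewrite -card_finFieldExt.
have zs_uniq : uniq zs.
  rewrite -separable_prod_XsubC -(eqp_separable p_split) separable_Xn_sub_X //.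
  by rewrite natrX -(rmorph_nat (in_alg M)) natr_card_eq0 rmorph0 expr0n gtn_eqF.
have [alpha _ alpha_frob] := finField_galois_generator (sub1v {:M}).
rewrite dimv1 expn1 in alpha_frob.
have alphaX z : (alpha ^+ k)%g z = z ^+ N.
  rewrite /N; elim: (k) => [|i IHi]; first by rewrite gal_id.
  by rewrite expgSr expnSr exprM galM ?memvf // IHi alpha_frob ?memvf.
have root_p z : (z \in zs) = (z ^+ N == z).
  by rewrite -root_prod_XsubC -(eqp_root p_split) /root !hornerE subr_eq0.
have M_fixed : ({:M} <= fixedField [set (alpha ^+ k)%g])%VS.
  rewrite -M_gen; apply/Fadjoin_seqP; split=> [|z zs_z]; first exact: sub1v.
  apply/fixedFieldP; rewrite ?memvf // => _ /set1P->.
  by rewrite alphaX; apply/eqP; rewrite -root_p.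
have size_zs : size zs = N.
  by apply: succn_inj; rewrite -(size_prod_XsubC zs id) -(eqp_size p_split) size_p.
rewrite -[RHS]/N -size_zs -(@card_uniqP (FinFieldExtType M) zs zs_uniq).
apply: eq_card => z; rewrite root_p.
have /fixedFieldP := subvP M_fixed z (memvf z).
by move=> /(_ (memvf z) _ (set11 _)); rewrite alphaX => ->; rewrite eqxx.
Qed.

Lemma inj_ord_finType (T : finType) (n : nat) :
  (n <= #|T|)%N -> {f : 'I_n -> T | injective f}.
Proof.
move=> le_n_T; exists (fun i => enum_val (widen_ord le_n_T i)).
by move=> i j /enum_val_inj /(congr1 val) /= /val_inj.
Qed.

Lemma tower_MR_LRC (Fq : finFieldType) (E : fieldExtType Fq)
    (L : fieldExtType (FinFieldExtType E)) (g r a h : nat) :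
  (0 < a)%N -> (a <= r)%N -> (r <= #|Fq|)%N -> (g <= #|FinFieldExtType E|)%N ->
  (minn h g <= \dim {:L})%N -> (minn (a + h) r <= \dim {:E})%N ->
  exists (A : 'I_g -> 'M[FinFieldExtType L]_(a, r)) (D : 'I_g -> 'M_(h, r)),
    is_MR_LRC A D.
Proof.
move=> a_gt0 a_le_r r_le_Fq g_le_E le_dimL le_dimE.
have [x x_inj] := inj_ord_finType r_le_Fq.
have [al al_inj] := inj_ord_finType g_le_E.
pose iota : {rmorphism Fq -> L} := in_alg L \o in_alg E.
pose gam i j : L := vandermonde_vec E (x j) *: vandermonde_vec L (al i).
exists (fun=> Vandermonde a (\row_j iota (x j))).
exists (fun i => \matrix_(u < h, j < r) gam i j ^+ (#|Fq| ^ u)).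
apply: linearized_vandermonde_MR => //.
exact: sparse_indepW (vandermonde_tower_sparse_indep x_inj al_inj).
Qed.

Theorem theorem3p7 (r g a h m q : nat) :
  (0 < r)%N -> (0 < g)%N -> (0 < a)%N -> (0 < h)%N -> (0 < m)%N ->
  (a <= r)%N -> (g * a + h < g * r)%N ->
  prime_power q -> (r <= q)%N ->
  ((m * (r * g)) %/ r <= q ^ m)%N ->
  (exists (Fq : finFieldType) (G : 'M[Fq]_(r - a, r)),
      #|Fq| = q /\ lin_code (a + 1) G) ->
  ((r <= m)%N \/
   ((m < r)%N /\ exists (Fq : finFieldType) (G : 'M[Fq]_(r - m, r)),
      #|Fq| = q /\ lin_code_ge (h + a + 1) G)) ->
  exists_MR_LRC (q ^ minn (h * m) ((r * g) * m %/ r)) g r a h.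
Proof.
move=> r_gt0 g_gt0 a_gt0 h_gt0 m_gt0 a_le_r _ _ r_le_q g_bound.
case=> Fq [_ [card_Fq _]] m_large.
have m_ge : (minn (a + h) r <= m)%N.
  case: m_large => [r_le_m | [m_lt_r [Fq' [G [_ G_code]]]]].
    exact: leq_trans (geq_minr _ _) r_le_m.
  have := singleton_bound _ (leq_subr m r) G_code.
  rewrite subn_gt0 subKn ?(ltnW m_lt_r) // => /(_ m_lt_r) ?.
  by rewrite (leq_trans (geq_minl _ _)) //; lia.
have rgm_r : (r * g * m %/ r = g * m)%N by rewrite -mulnA mulKn.
have g_le_qm : (g <= q ^ m)%N.
  by apply: leq_trans g_bound; rewrite mulnCA mulKn // leq_pmull.
have t_gt0 : (0 < minn h g)%N by rewrite leq_min h_gt0 g_gt0.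
have [E dimE] := finField_ext_exists Fq m_gt0.
have [L dimL] := finField_ext_exists (FinFieldExtType E) t_gt0.
exists (FinFieldExtType L); split.
  rewrite !card_finFieldExt dimL dimE card_Fq -expnM rgm_r.
  by rewrite -minnMl mulnC.
by apply: tower_MR_LRC; rewrite ?card_finFieldExt ?dimL ?dimE ?card_Fq.
Qed.
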